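(* Let $G$ be a graph, $k,\ell\ge1$, and let $J_0,J_1,\dots,J_\ell$ be independent sets of $G$ with $J_0=S$, where $S$ is an independent set of size $k$. Define collections $\mathcal{C}_0,\dots,\mathcal{C}_\ell$ of constraint sets as follows: $\mathcal{C}_0=\{\{(S,k)\}\}$; for $i\in\{1,\dots,\ell\}$, $\mathcal{C}_i$ contains, for every $C\in\mathcal{C}_{i-1}$ and every constraint $(X,b)\in C$, the constraint set $C'$ consisting of: $(N(X)\cap J_i,1)$; $(X\cap J_i,b-1)$ if $b\ge2$ (nothing if $b=1$); and $(X'\cap J_i,b')$ for every other constraint $(X',b')\in C$. Then for every $i\in\{0,\dots,\ell\}$ and every $C\in\mathcal{C}_i$, the vertex sets $X$ of the constraints $(X,b)\in C$ are pairwise disjoint.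
   Context: A constraint is a pair $(X,b)$ with $X\subseteq V(G)$ and $b$ a positive integer. Constraint sets and the collections $\mathcal{C}_i$ are taken with multiplicity (one constraint set $C'$ per pair $(C,(X,b))$, and one entry per constraint). For $X\subseteq V(G)$, $N(X)=\{v\notin X: v\text{ adjacent to some }u\in X\}$. In the paper, $J_1,\dots,J_{\ell}$ are members of an independence covering family for $(G,k)$ (a family of independent sets such that every independent set of size at most $k$ is contained in a member), with $J_\ell=T$ another independent set of size $k$. *)

From mathcomp Require Import all_boot.
Set Implicit Arguments. Unset Strict Implicit. Unset Printing Implicit Defensive.

Section Constraints.
Variables (V : finType) (e : rel V).

Definition simple_graph := symmetric e /\ irreflexive e.

Definition independent (J : {set V}) : Prop :=
  forall u v, u \in J -> v \in J -> ~~ e u v.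

Definition nbh (X : {set V}) : {set V} :=
  [set v | (v \notin X) && [exists u in X, e u v]].

(* a constraint (X,b); constraint sets are sequences (with multiplicity) *)
Definition constraint := ({set V} * nat)%type.
Definition cdef : constraint := (set0, 0).

Definition refine (Ji : {set V}) (C : seq constraint) (j : nat) : seq constraint :=
  let Xb := nth cdef C j in
  (nbh Xb.1 :&: Ji, 1)
    :: (if 2 <= Xb.2 then [:: (Xb.1 :&: Ji, Xb.2 - 1)] else [::])
    ++ [seq (c.1 :&: Ji, c.2) | c <- take j C ++ drop j.+1 C].

Definition step (Ji : {set V}) (Cs : seq (seq constraint)) : seq (seq constraint) :=
  flatten [seq [seq refine Ji C j | j <- iota 0 (size C)] | C <- Cs].

Fixpoint coll (S : {set V}) (k : nat) (J : nat -> {set V}) (i : nat)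
  : seq (seq constraint) :=
  match i with
  | 0 => [:: [:: (S, k)]]
  | i'.+1 => step (J i) (coll S k J i')
  end.

End Constraints.

From mathcomp Require Import all_boot.
Set Implicit Arguments. Unset Strict Implicit. Unset Printing Implicit Defensive.

(* Invariant: the vertex sets of every constraint set in C_i lie in J_i and are
   pairwise disjoint. Refining C along (X,b) intersects all sets with J_(i+1),
   which preserves disjointness, and adds N(X) :&: J_(i+1); since X lies in the
   independent set J_i, no vertex of J_i is adjacent to X, so N(X) misses every
   old vertex set. *)

Lemma pairwise_catCA (T : Type) (r : rel T) (s1 s2 : seq T) (x : T) :
  symmetric r -> pairwise r (s1 ++ x :: s2) = pairwise r (x :: s1 ++ s2).
Proof.
move=> r_sym; rewrite pairwise_cons !pairwise_cat allrel_consr all_cat /=.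
rewrite (eq_all (a2 := r x)) => [|y]; last exact: r_sym.
by case: (all (r x) s2); rewrite ?andbT ?andbF ?andFb -?andbA.
Qed.

Section Refinement.
Variables (V : finType) (e : rel V).
Implicit Types (I J X : {set V}) (C : seq (constraint V)).

Definition within I C := all (fun c : constraint V => c.1 \subset I) C.

Definition vertex_disjoint C :=
  pairwise (fun c d : constraint V => [disjoint c.1 & d.1]) C.

Lemma vertex_disjoint_nth C p q :
  vertex_disjoint C -> p < size C -> q < size C -> p != q ->
  [disjoint (nth (cdef V) C p).1 & (nth (cdef V) C q).1].
Proof.
move=> /(pairwiseP (cdef V)) disjC ltpC ltqC.
case: ltngtP => // [ltpq | ltqp] _; first exact: disjC.
by rewrite disjoint_sym; apply: disjC.
Qed.

Lemma independent_nbh_disjoint I X :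
  independent e I -> X \subset I -> [disjoint nbh e X & I].
Proof.
move=> indI sXI; rewrite -setI_eq0; apply/eqP/setP => v; rewrite !inE.
apply/negP => /andP[/andP[_ /existsP[u /andP[uX euv]]] vI].
by have := indI u v (subsetP sXI u uX) vI; rewrite euv.
Qed.

Lemma refine_within J C j : within J (refine e J C j).
Proof.
rewrite /refine /within /= subsetIr /= all_cat all_map.
apply/andP; split; first by case: (2 <= _) => //=; rewrite subsetIr.
by apply/allP => c _ /=; rewrite subsetIr.
Qed.

Lemma refine_vertex_disjoint I J C j :
  independent e I -> within I C -> vertex_disjoint C -> j < size C ->
  vertex_disjoint (refine e J C j).
Proof.
move=> indI sCI disjC ltjC; rewrite /refine.
set X := nth _ C j; set others := take j C ++ drop j.+1 C.
have defC : C = take j C ++ X :: drop j.+1 C by rewrite -drop_nth // cat_take_drop.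
have /andP[sXI sOI] : within I (X :: others).
  by move: sCI; rewrite {1}defC /within /others !all_cat /= andbCA all_cat.
have /andP[disjX disjO] : vertex_disjoint (X :: others).
  by rewrite /vertex_disjoint -pairwise_catCA -?defC // => c d; rewrite disjoint_sym.
have shrink_disjO : vertex_disjoint [seq (c.1 :&: J, c.2) | c <- others].
  rewrite /vertex_disjoint pairwise_map; apply: sub_pairwise disjO => c d /=.
  exact: disjointW (subsetIl _ _) (subsetIl _ _).
set tail := (if _ then _ else _) ++ _.
have sTI : within I tail.
  rewrite /tail /within all_cat all_map; apply/andP; split.
    by case: (2 <= _) => //=; rewrite andbT (subset_trans (subsetIl _ _)).
  by apply: sub_all sOI => c /= sc; rewrite (subset_trans (subsetIl _ _)).
have disjT : vertex_disjoint tail.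
  rewrite /tail; case: (2 <= _) => //.
  rewrite /vertex_disjoint /= all_map; apply/andP; split; last exact: shrink_disjO.
  by apply: sub_all disjX => c /=; apply: disjointW (subsetIl _ _) (subsetIl _ _).
apply/andP; split; last exact: disjT.
apply: sub_all sTI => c /= scI.
exact: disjointW (subsetIl _ _) scI (independent_nbh_disjoint indI sXI).
Qed.

Lemma mem_step J (Cs : seq (seq (constraint V))) C :
  C \in step e J Cs ->
  exists2 C0, C0 \in Cs & exists2 j, j < size C0 & C = refine e J C0 j.
Proof.
case/flattenP => _ /mapP[C0 C0in ->] /mapP[j]; rewrite mem_iota add0n => lt_jC0 ->.
by exists C0 => //; exists j.
Qed.

Lemma coll_invariant S k (J : nat -> {set V}) l :
  J 0 = S -> (forall i, i <= l -> independent e (J i)) ->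
  forall i, i <= l -> forall C, C \in coll e S k J i ->
  within (J i) C && vertex_disjoint C.
Proof.
move=> J0 indJ; elim=> [|i IHi] lt_il C /=.
  by rewrite inE => /eqP ->; rewrite /within /vertex_disjoint /= J0 subxx.
case/mem_step => C0 C0in [j lt_jC0 ->]; rewrite refine_within /=.
have /andP[sC0J disjC0] := IHi (ltnW lt_il) C0 C0in.
exact: refine_vertex_disjoint (indJ i (ltnW lt_il)) sC0J disjC0 lt_jC0.
Qed.

End Refinement.

Theorem lemma3p3 (V : finType) (e : rel V) (k l : nat)
  (S : {set V}) (J : nat -> {set V}) :
  simple_graph e -> 1 <= k -> 1 <= l ->
  independent e S -> #|S| = k -> J 0 = S ->
  (forall i, i <= l -> independent e (J i)) ->
  forall i, i <= l ->
  forall C, C \in coll e S k J i ->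
  forall p q, p < size C -> q < size C -> p != q ->
  [disjoint (nth (cdef V) C p).1 & (nth (cdef V) C q).1].
Proof.
(* Only the independence of J_0, ..., J_l is needed. *)
move=> _ _ _ _ _ J0 indJ i le_il C CinCi p q.
have /andP[_ disjC] := coll_invariant J0 indJ le_il CinCi.
exact: vertex_disjoint_nth.
Qed.
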